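(* Let $m\geq\beta\geq 1$ be integers and let $G^*$ be a graph with maximum $q$ among all graphs in $\mathfrak{G}_{m,\geq\beta}$. Let $X^*$ be a principal eigenvector of $Q(G^* )$ with coordinates $x^*_v$, let $M^*(G^* )=\{u_1v_1,\ldots,u_{\beta(G^* )}v_{\beta(G^* )}\}$ be a matching of $G^*$ extremal to $X^*$, and let $V^*=\{u_i,v_i : i=1,\ldots,\beta(G^* )\}$. Then $x^*_w\leq \min_{v\in V^*}x^*_v$ for every vertex $w\in V(G^* )\setminus V^*$.
   Context: All graphs are finite, simple and undirected (isolated vertices allowed). $Q(G)=D(G)+A(G)$ is the signless Laplacian matrix and $q(G)$ its largest eigenvalue; a principal eigenvector of $Q(G)$ is a nonnegative unit vector $X$ with $Q(G)X=q(G)X$. $\beta(G)$ is the matching number of $G$. $\mathfrak{G}_{m,\geq\beta}$ denotes the set of graphs with exactly $m$ edges and matching number at least $\beta$. For a graph $G$ with at least one edge and a principal eigenvector $X$ (coordinates $x_v$), a matching $M^*(G)$ of $G$ is said to be extremal to $X$ if it is a maximum matching (of size $\beta(G)$) and $\sum_{uv\in M^*(G)}(x_u+x_v)^2=\max_M\sum_{uv\in M}(x_u+x_v)^2$, the maximum taken over all maximum matchings $M$ of $G$. *)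

From HB Require Import structures.
From mathcomp Require Import all_boot all_order all_algebra.
From mathcomp Require Import reals.
Set Implicit Arguments. Unset Strict Implicit. Unset Printing Implicit Defensive.
Import Order.TTheory GRing.Theory Num.Theory.
Local Open Scope ring_scope.

(* A finite simple graph on vertex set 'I_n is given by its edge set:
   a set of 2-element subsets of 'I_n. Isolated vertices allowed. *)
Definition is_graph (n : nat) (E : {set {set 'I_n}}) : bool :=
  [forall e in E, #|e| == 2%N].

Definition nedges (n : nat) (E : {set {set 'I_n}}) : nat := #|E|.

Definition adj (n : nat) (E : {set {set 'I_n}}) (u v : 'I_n) : bool :=
  (u != v) && ([set u; v] \in E).

Definition deg (n : nat) (E : {set {set 'I_n}}) (v : 'I_n) : nat :=
  #|[set e in E | v \in e]|.

Definition Qmx (R : numDomainType) (n : nat) (E : {set {set 'I_n}}) : 'M[R]_n :=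
  \matrix_(i, j) ((deg E i)%:R * (i == j)%:R + (adj E i j)%:R).

Definition is_q (R : realType) (n : nat) (E : {set {set 'I_n}}) (r : R) : Prop :=
  eigenvalue (Qmx R E) r /\ (forall a : R, eigenvalue (Qmx R E) a -> a <= r).

Definition principal_eigvec (R : realType) (n : nat) (E : {set {set 'I_n}})
  (X : 'cV[R]_n) : Prop :=
  exists r : R, is_q E r /\ Qmx R E *m X = r *: X /\
    (forall i, 0 <= X i 0) /\ \sum_i (X i 0) ^+ 2 = 1.

Definition is_matching (n : nat) (E M : {set {set 'I_n}}) : bool :=
  (M \subset E) && trivIset M.

Definition matching_number (n : nat) (E : {set {set 'I_n}}) : nat :=
  \max_(M : {set {set 'I_n}} | is_matching E M) #|M|.

Definition is_max_matching (n : nat) (E M : {set {set 'I_n}}) : bool :=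
  is_matching E M && (#|M| == matching_number E).

Definition mweight (R : realType) (n : nat) (X : 'cV[R]_n) (M : {set {set 'I_n}}) : R :=
  \sum_(e in M) (\sum_(v in e) X v 0) ^+ 2.

Definition extremal_matching (R : realType) (n : nat) (E : {set {set 'I_n}})
  (X : 'cV[R]_n) (M : {set {set 'I_n}}) : Prop :=
  is_max_matching E M /\
  (forall M' : {set {set 'I_n}}, is_max_matching E M' -> mweight X M' <= mweight X M).

Definition in_class (m beta n : nat) (E : {set {set 'I_n}}) : bool :=
  [&& is_graph E, nedges E == m & beta <= matching_number E]%N.

(* Suppose x_w > x_v for an uncovered vertex w and a vertex v covered by the
   edge vp of M.  Exchanging vp for wp in M gives a matching of the same size
   whose weight, the sum over its edges uv of (x_u + x_v)^2, is strictly larger.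
   If wp is an edge of G, this contradicts the extremality of M.  Otherwise
   G' = G - vp + wp is again in the class (m edges, a matching of size beta(G)),
   and since X^T Q(G) X is the sum of (x_u + x_v)^2 over the edges of G, the
   Rayleigh principle gives q(G') >= X^T Q(G') X > X^T Q(G) X = q(G),
   contradicting the maximality of q(G).  The Rayleigh principle for the real
   symmetric matrix Q(G) comes from the spectral theorem over R[i]. *)

From mathcomp Require Import all_boot all_order all_algebra.
From mathcomp Require Import reals complex spectral lra.
Set Implicit Arguments. Unset Strict Implicit. Unset Printing Implicit Defensive.
Import Order.TTheory GRing.Theory Num.Theory.
Local Open Scope ring_scope.

Definition qform (R : pzRingType) n (A : 'M[R]_n) (x : 'cV[R]_n) : R :=
  (x^T *m A *m x) 0 0.

Section QuadraticForm.
Variables (R : comPzRingType) (n : nat).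
Implicit Types (A : 'M[R]_n) (x : 'cV[R]_n).

Lemma qformE A x : qform A x = \sum_i \sum_j x i 0 * A i j * x j 0.
Proof.
rewrite /qform mxE exchange_big; apply: eq_bigr => j _ /=.
by rewrite !mxE mulr_suml; apply: eq_bigr => i _; rewrite !mxE.
Qed.

Lemma qform1 x : qform 1%:M x = \sum_i x i 0 ^+ 2.
Proof. by rewrite /qform mulmx1 mxE; apply: eq_bigr => i _; rewrite mxE. Qed.

Lemma qform_eigenvector A x r : A *m x = r *: x -> qform A x = r * qform 1%:M x.
Proof. by move=> Ax; rewrite /qform -!mulmxA Ax mul1mx -scalemxAr mxE. Qed.

End QuadraticForm.

Lemma qform1_gt0 (R : realDomainType) n (x : 'cV[R]_n) : x != 0 -> 0 < qform 1%:M x.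
Proof.
move=> x_neq0; rewrite qform1 lt_def sumr_ge0 ?andbT => [|i _]; last exact: sqr_ge0.
apply: contra x_neq0 => /eqP/psumr_eq0P x2_eq0; apply/eqP/colP => i.
by apply/eqP; rewrite mxE -sqrf_eq0 x2_eq0 // => j _; rewrite sqr_ge0.
Qed.

Lemma eigenvalue_le_qform_bound (R : realFieldType) n (A : 'M[R]_n) (l a : R) :
  (forall x, qform A x <= l * qform 1%:M x) -> eigenvalue A a -> a <= l.
Proof.
move=> A_bound /eigenvalueP[v vA v_neq0].
have v_form : qform A v^T = a * qform 1%:M v^T.
  by rewrite /qform trmxK vA mulmx1 -scalemxAl mxE.
by have := A_bound v^T; rewrite v_form ler_pM2r // qform1_gt0 ?trmx_eq0.
Qed.

Section NormalMatrix.
Local Open Scope sesquilinear_scope.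
Variables (C : numClosedFieldType) (n : nat) (A : 'M[C]_n).
Hypothesis A_normal : A \is normalmx.
Let P := spectralmx A.
Let d := spectral_diag A.

Lemma spectral_unitary_decomposition : A = P^t* *m diag_mx d *m P.
Proof. by rewrite -invmx_unitary ?spectral_unitarymx //; exact/orthomx_spectralP. Qed.

Lemma spectral_diag_eigenvalue k : eigenvalue A (d 0 k).
Proof.
have PPt : P *m P^t* = 1%:M by apply/unitarymxP; exact: spectral_unitarymx.
pose e : 'rV[C]_n := delta_mx 0 k.
have e_diag : e *m diag_mx d = d 0 k *: e.
  apply/rowP => j; rewrite mul_mx_diag !mxE.
  by case: (j =P k) => [->|]; rewrite ?andbT ?andbF ?mul0r ?mulr0 // mulrC.
apply/eigenvalueP; exists (e *m P).
  rewrite {1}spectral_unitary_decomposition !mulmxA -(mulmxA _ P) PPt mulmx1.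
  by rewrite e_diag scalemxAl.
apply: contra_neq (@oner_neq0 C) => eP0.
have := congr1 (fun u => (u *m P^t*) 0 k) eP0.
by rewrite -mulmxA PPt mulmx1 mul0mx !mxE !eqxx.
Qed.

Lemma normal_form_le (l : C) (u : 'rV_n) :
  (forall k, d 0 k <= l) -> (u *m A *m u^t*) 0 0 <= l * (u *m u^t*) 0 0.
Proof.
move=> d_le; pose y := u *m P^t*.
have yJ : y^t* = P *m u^t* by rewrite /y trmx_mul map_mxM trmxCK.
have PtP : P^t* *m P = 1%:M by apply: mulmx1C; apply/unitarymxP; exact: spectral_unitarymx.
have -> : u *m A *m u^t* = y *m diag_mx d *m y^t*.
  by rewrite {1}spectral_unitary_decomposition yJ !mulmxA.
have -> : u *m u^t* = y *m y^t* by rewrite yJ mulmxA -(mulmxA u) PtP mulmx1.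
rewrite !mxE mulr_sumr; apply: ler_sum => j _.
by rewrite mul_mx_diag !mxE mulrAC mulrC ler_wpM2r ?mul_conjC_ge0.
Qed.

End NormalMatrix.

Section Rayleigh.
Local Open Scope sesquilinear_scope.
Variable R : rcfType.
Local Notation toC := (real_complex R).

Lemma symmetric_max_eigenvalue n (A : 'M[R]_n) : (0 < n)%N -> A^T = A ->
  exists2 l, eigenvalue A l & forall x, qform A x <= l * qform 1%:M x.
Proof.
move=> n_gt0 A_sym; pose Ac := map_mx toC A.
have Ac_herm : Ac \is hermsymmx.
  apply: realsym_hermsym.
    apply/is_hermitianmxP; rewrite /= expr0 scale1r map_mx_id //.
    by apply/matrixP => i j; rewrite !mxE -[in LHS]A_sym mxE.
  by apply/mxOverP => i j; rewrite mxE; apply/CrealP; exact: conjc_real.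
have Ac_normal := hermitian_normalmx Ac_herm.
set d := spectral_diag Ac.
have d_Re k : d 0 k = (complex.Re (d 0 k))%:C%C.
  by rewrite RRe_real //; move/mxOverP: (hermitian_spectral_diag_real Ac_herm).
pose i0 := Order.arg_max (Ordinal n_gt0) xpredT (fun i => complex.Re (d 0 i)).
have d_max k : complex.Re (d 0 k) <= complex.Re (d 0 i0).
  by rewrite /i0; case: arg_maxP => // i _ /(_ k isT).
exists (complex.Re (d 0 i0)).
  rewrite -(eigenvalue_map toC); have := spectral_diag_eigenvalue Ac_normal i0.
  by rewrite -/d [d 0 i0]d_Re.
move=> x; pose u := (map_mx toC x)^T.
have uJ : u^t* = map_mx toC x.
  by apply/matrixP => i j; rewrite !mxE; exact: conjc_real.
have toC_qform B : toC (qform B x) = (u *m map_mx toC B *m u^t*) 0 0.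
  by rewrite uJ /u map_trmx -!map_mxM mxE.
rewrite -lecR -[_%:C%C]/(toC _) rmorphM /= !toC_qform map_mx1 mulmx1.
by apply: normal_form_le => // k; rewrite [d 0 k]d_Re lecR.
Qed.

End Rayleigh.

Lemma Qmx_sym (R : numDomainType) n (E : {set {set 'I_n}}) : (Qmx R E)^T = Qmx R E.
Proof.
apply/matrixP => i j; rewrite !mxE /adj eq_sym setUC.
by case: (eqVneq i j) => [->|]; rewrite ?mulr0.
Qed.

Section LargestEigenvalue.
Variables (R : realType) (n : nat) (E : {set {set 'I_n}}).

Lemma is_q_unique (r s : R) : is_q E r -> is_q E s -> r = s.
Proof. by move=> [r_eig r_max] [s_eig s_max]; apply/le_anti; rewrite r_max ?s_max. Qed.

Lemma is_q_qform_bound : (0 < n)%N ->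
  exists2 r, is_q E r & forall x, qform (Qmx R E) x <= r * qform 1%:M x.
Proof.
move=> n_gt0; have [r r_eig r_bound] := symmetric_max_eigenvalue n_gt0 (Qmx_sym R E).
by exists r => //; split => // a; apply: eigenvalue_le_qform_bound.
Qed.

End LargestEigenvalue.

Section SignlessLaplacian.
Variables (n : nat) (E : {set {set 'I_n}}).
Hypothesis E_graph : is_graph E.

Lemma edge_card e : e \in E -> #|e| = 2.
Proof. by move=> e_E; apply/eqP; move/forall_inP: E_graph; apply. Qed.

Lemma edge_other_end e v : e \in E -> v \in e -> exists2 p, v != p & e = [set v; p].
Proof.
move=> /edge_card /eqP /cards2P [a [b [ab ->]]]; rewrite !inE => /orP [] /eqP ->.
  by exists b.
by exists a; rewrite 1?eq_sym // setUC.
Qed.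

Lemma card_edges_through2 i j : i != j ->
  #|[set e in E | (i \in e) && (j \in e)]| = ([set i; j] \in E).
Proof.
move=> ij; have -> : [set e in E | (i \in e) && (j \in e)] = [set e in E | e == [set i; j]].
  apply/setP => e; rewrite !inE; case e_E: (e \in E) => //=.
  apply/andP/eqP => [[ie je]|->]; last by rewrite !inE !eqxx orbT.
  by apply/eqP; rewrite eq_sym eqEcard subUset !sub1set ie je edge_card // cards2 ij.
have [ij_E|ij_notin_E] := boolP ([set i; j] \in E).
  rewrite (_ : [set e in E | _] = [set [set i; j]]) ?cards1 //.
  by apply/setP => e; rewrite !inE andb_idl // => /eqP ->.
apply/eqP; rewrite cards_eq0; apply/eqP/setP => e; rewrite !inE.
by apply/negP => /andP[e_E /eqP e_ij]; rewrite -e_ij e_E in ij_notin_E.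
Qed.

Lemma Qmx_coef (R : numDomainType) i j :
  Qmx R E i j = #|[set e in E | (i \in e) && (j \in e)]|%:R.
Proof.
rewrite mxE /adj; have [<-|ij] := eqVneq i j; last by rewrite mulr0 add0r card_edges_through2.
by rewrite mulr1 addr0 /deg; congr _%:R; apply: eq_card => e; rewrite !inE andbb.
Qed.

Lemma qform_Qmx (R : realType) (x : 'cV[R]_n) : qform (Qmx R E) x = mweight x E.
Proof.
have incidence i j : Qmx R E i j = \sum_(e in E) ((i \in e) && (j \in e))%:R.
  rewrite Qmx_coef -sum1dep_card natr_sum big_mkcondr /=.
  by apply: eq_bigr => e _; case: (_ && _).
rewrite qformE /mweight; symmetry.
transitivity (\sum_(e in E) \sum_i \sum_j x i 0 * ((i \in e) && (j \in e))%:R * x j 0).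
  apply: eq_bigr => e _; rewrite expr2 big_distrlr big_mkcond /=; apply: eq_bigr => i _.
  case: ifP => _; last by rewrite big1 // => j _; rewrite mulr0 mul0r.
  by rewrite big_mkcond; apply: eq_bigr => j _; case: (j \in e); rewrite ?mulr1 ?mulr0 ?mul0r.
rewrite exchange_big; apply: eq_bigr => i _; rewrite exchange_big; apply: eq_bigr => j _.
by rewrite incidence mulr_sumr mulr_suml.
Qed.

End SignlessLaplacian.

Section SetExchange.
Variable T : finType.

Lemma card_exchange (S : {set T}) (e f : T) :
  e \in S -> f \notin S -> #|f |: (S :\ e)| = #|S|.
Proof.
by move=> e_S f_S; rewrite cardsU1 !inE (negbTE f_S) andbF [in RHS](cardsD1 e) e_S.
Qed.

Lemma trivIset_exchange (M : {set {set T}}) (e f : {set T}) :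
  trivIset M -> e \in M -> f \subset e :|: ~: cover M -> trivIset (f |: (M :\ e)).
Proof.
move=> /trivIsetP M_triv e_M f_sub.
have f_disj B : B \in M :\ e -> [disjoint f & B].
  case/setD1P => B_e B_M; rewrite -[B]setCK -subsets_disjoint.
  apply: subset_trans f_sub _; rewrite subUset subsets_disjoint setCK M_triv 1?eq_sym //=.
  by rewrite setCS; apply: bigcup_sup.
apply/trivIsetP => A B /setU1P[->|A_M] /setU1P[->|B_M] AB.
- by rewrite eqxx in AB.
- exact: f_disj.
- by rewrite disjoint_sym; apply: f_disj.
- by apply: M_triv; [move/setD1P: A_M => [] | move/setD1P: B_M => [] |].
Qed.

Lemma uncovered_exchange (M : {set {set T}}) (e : {set T}) (w p : T) :
  e \in M -> p \in e -> w \notin cover M ->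
  [/\ w != p, [set w; p] \notin M & [set w; p] \subset e :|: ~: cover M].
Proof.
move=> e_M p_e w_notin; split.
- by apply: contraNneq w_notin => ->; apply/bigcupP; exists e.
- by apply: contra w_notin => wp_M; apply/bigcupP; exists [set w; p]; rewrite // !inE eqxx.
- by rewrite subUset !sub1set !inE w_notin p_e orbT.
Qed.

End SetExchange.

Lemma sum_set2 (V : nmodType) (T : finType) (F : T -> V) (a b : T) :
  a != b -> \sum_(u in [set a; b]) F u = F a + F b.
Proof. by move=> ab; rewrite big_setU1 ?inE // big_set1. Qed.

Lemma card_matching_le n (E M : {set {set 'I_n}}) :
  is_matching E M -> (#|M| <= matching_number E)%N.
Proof. exact: leq_bigmax_cond. Qed.

Lemma is_graph_exchange n (E : {set {set 'I_n}}) (e f : {set 'I_n}) :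
  is_graph E -> #|f| = 2 -> is_graph (f |: (E :\ e)).
Proof.
move=> /forall_inP E_graph f2; apply/forall_inP => B /setU1P[->|/setD1P[_ B_E]].
  by rewrite f2.
exact: E_graph.
Qed.

Section MatchingExchange.
Variables (R : realType) (n : nat) (X : 'cV[R]_n) (E M : {set {set 'I_n}}).
Variables (e f : {set 'I_n}).
Hypotheses (e_M : e \in M) (f_notin_M : f \notin M) (f_sub : f \subset e :|: ~: cover M).
Hypothesis gain : (\sum_(u in e) X u 0) ^+ 2 < (\sum_(u in f) X u 0) ^+ 2.

Lemma mweight_exchange_lt (S : {set {set 'I_n}}) : e \in S -> f \notin S ->
  mweight X S < mweight X (f |: (S :\ e)).
Proof.
move=> e_S f_S; have f_notin_Se : f \notin S :\ e by rewrite !inE (negbTE f_S) andbF.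
by rewrite /mweight big_setU1 //= [in L in L < _](big_setD1 e) //= ltrD2r.
Qed.

Lemma extremal_exchange_notin : extremal_matching E X M -> f \notin E.
Proof.
move=> [/andP[/andP[M_sub M_triv] /eqP M_max] M_extremal]; apply/negP => f_E.
have M'_max : is_max_matching E (f |: (M :\ e)).
  rewrite /is_max_matching /is_matching trivIset_exchange // card_exchange // M_max.
  by rewrite eqxx subUset sub1set f_E (subset_trans (subsetDl _ _) M_sub).
by have := M_extremal _ M'_max; rewrite leNgt mweight_exchange_lt.
Qed.

Lemma in_class_exchange m beta : in_class m beta E -> is_max_matching E M ->
  #|f| = 2 -> f \notin E -> in_class m beta (f |: (E :\ e)).
Proof.
move=> /and3P[E_graph /eqP E_m beta_le] /andP[/andP[M_sub M_triv] /eqP M_max] f2 f_notin_E.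
have e_E : e \in E := subsetP M_sub e e_M.
rewrite /in_class is_graph_exchange //= /nedges card_exchange // -/(nedges E) E_m eqxx /=.
apply: leq_trans beta_le _; rewrite -M_max -(card_exchange e_M f_notin_M).
apply: card_matching_le; rewrite /is_matching trivIset_exchange // andbT.
by rewrite setUS // setSD.
Qed.

End MatchingExchange.

Theorem lemma2p2 (R : realType) (m beta : nat) (n : nat)
  (E : {set {set 'I_n}}) (qstar : R) (X : 'cV[R]_n) (M : {set {set 'I_n}}) :
  (1 <= beta)%N -> (beta <= m)%N ->
  in_class m beta E ->
  is_q E qstar ->
  (forall (n' : nat) (E' : {set {set 'I_n'}}) (r : R),
      in_class m beta E' -> is_q E' r -> r <= qstar) ->
  principal_eigvec E X ->
  extremal_matching E X M ->
  forall w : 'I_n, w \notin cover M ->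
  forall v : 'I_n, v \in cover M -> X w 0 <= X v 0.
Proof.
move=> _ _ E_class q_E q_max [r [q_r [X_eig [X_ge0 X_unit]]]] M_extremal w w_notin v v_in.
have E_graph : is_graph E by case/and3P: E_class.
have M_max := M_extremal.1; have /andP[/andP[M_sub _] _] := M_max.
have E_weight : mweight X E = qstar.
  by rewrite -qform_Qmx // (qform_eigenvector X_eig) qform1 X_unit mulr1 (is_q_unique q_r q_E).
rewrite leNgt; apply/negP => Xvw.
have [e e_M v_e] := bigcupP v_in; have e_E := subsetP M_sub e e_M.
have [p v_p e_vp] := edge_other_end E_graph e_E v_e.
have p_e : p \in e by rewrite e_vp !inE eqxx orbT.
have [w_p wp_notin_M wp_sub] := uncovered_exchange e_M p_e w_notin.
have gain : (\sum_(u in e) X u 0) ^+ 2 < (\sum_(u in [set w; p]) X u 0) ^+ 2.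
  by rewrite e_vp (sum_set2 _ v_p) (sum_set2 _ w_p) ltrXn2r ?addr_ge0 ?ltrD2r ?X_ge0.
have wp_notin_E := extremal_exchange_notin e_M wp_notin_M wp_sub gain M_extremal.
have wp_card : #|[set w; p]| = 2 by rewrite cards2 w_p.
have E'_class := in_class_exchange e_M wp_notin_M wp_sub E_class M_max wp_card wp_notin_E.
have n_gt0 : (0 < n)%N := leq_ltn_trans (leq0n w) (ltn_ord w).
have [l q_l l_bound] := is_q_qform_bound R ([set w; p] |: (E :\ e)) n_gt0.
have := l_bound X; rewrite qform_Qmx ?qform1 ?X_unit ?mulr1; last by case/and3P: E'_class.
have := q_max _ _ _ E'_class q_l; have := mweight_exchange_lt gain e_E wp_notin_E.
lra.
Qed.
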